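(* Let $(V,c)$ be a braided vector space (i.e. $c\in GL(V\otimes V)$ satisfies $(c\otimes \mathrm{Id})(\mathrm{Id}\otimes c)(c\otimes \mathrm{Id})=(\mathrm{Id}\otimes c)(c\otimes \mathrm{Id})(\mathrm{Id}\otimes c)$) which is of left group-type (resp. right group-type) with respect to an ordered basis $[x_1,\ldots,x_m]$ of $V$, and define $S\in GL(V\otimes V)$ by $S(x_i\otimes x_j)=x_j\otimes x_i$. Then for every $n\ge 2$ the assignment $\sigma_i\mapsto \mathrm{Id}_V^{\otimes i-1}\otimes c\otimes \mathrm{Id}_V^{\otimes n-i-1}$, $s_i\mapsto \mathrm{Id}_V^{\otimes i-1}\otimes S\otimes \mathrm{Id}_V^{\otimes n-i-1}$ ($1\le i\le n-1$) defines a representation of $OLB_n$ (resp. of $LB_n$) on $V^{\otimes n}$; that is, $(V,c,S)$ is a loop braided vector space.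
   Context: $(V,c)$ is of left group-type w.r.t. $[x_1,\ldots,x_m]$ if there are $g_i\in GL(V)$ with $c(x_i\otimes z)=g_i(z)\otimes x_i$ for all $i$, $z\in V$; of right group-type if there are $g_j\in GL(V)$ with $c(z\otimes x_j)=x_j\otimes g_j(z)$ for all $j$, $z\in V$. The loop braid group $LB_n$ is the group generated by $\sigma_i,s_i$ ($1\le i\le n-1$) subject to: $\sigma_i\sigma_{i+1}\sigma_i=\sigma_{i+1}\sigma_i\sigma_{i+1}$; $\sigma_i\sigma_j=\sigma_j\sigma_i$ for $|i-j|>1$; $s_is_{i+1}s_i=s_{i+1}s_is_{i+1}$; $s_is_j=s_js_i$ for $|i-j|>1$; $s_i^2=1$; $\sigma_is_j=s_j\sigma_i$ for $|i-j|>1$; (L1) $s_is_{i+1}\sigma_i=\sigma_{i+1}s_is_{i+1}$; (L2) $\sigma_i\sigma_{i+1}s_i=s_{i+1}\sigma_i\sigma_{i+1}$. The group $OLB_n$ has the same generators and relations except that (L2) is replaced by (L3) $s_i\sigma_{i+1}\sigma_i=\sigma_{i+1}\sigma_is_{i+1}$. A triple $(V,c,S)$ with $S\in GL(V\otimes V)$ is called a loop braided vector space if the local assignment in the claim defines a representation of $LB_n$ or $OLB_n$. *)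

(* V = K^m with its standard ordered basis x_1..x_m (indices 'I_m).
   V^{(x)n} has basis the words {ffun 'I_n -> 'I_m}; linear operators are square
   matrices indexed (via enum_rank/enum_val) by the basis of the tensor power,
   acting on column vectors: entry (w', w) = coefficient of basis word w' in the
   image of basis word w. *)
From HB Require Import structures.
From mathcomp Require Import all_boot all_order all_algebra.
Set Implicit Arguments. Unset Strict Implicit. Unset Printing Implicit Defensive.
Import GRing.Theory.
Local Open Scope ring_scope.

Section LoopBraided.
Variables (K : fieldType) (m : nat).

(* basis of V (x) V : pairs (i,j) standing for x_i (x) x_j *)
Definition Pair := ('I_m * 'I_m)%type.
Definition Word (n : nat) := {ffun 'I_n -> 'I_m}.

Definition mxOf (W : finType) (f : W -> W -> K) : 'M[K]_#|W| :=
  \matrix_(a, b) f (enum_val a) (enum_val b).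
Definition coef (W : finType) (A : 'M[K]_#|W|) (w' w : W) : K :=
  A (enum_rank w') (enum_rank w).

Definition tens2 (u v : 'cV[K]_m) : 'cV[K]_#|{: Pair}| :=
  \col_a (u (enum_val a).1 0 * v (enum_val a).2 0).
Definition bvec (i : 'I_m) : 'cV[K]_m := \col_k (k == i)%:R.

Definition left_group_type (c : 'M[K]_#|{: Pair}|) : Prop :=
  exists g : 'I_m -> 'M[K]_m, forall i, g i \in unitmx /\
    forall z : 'cV[K]_m, c *m tens2 (bvec i) z = tens2 (g i *m z) (bvec i).
Definition right_group_type (c : 'M[K]_#|{: Pair}|) : Prop :=
  exists g : 'I_m -> 'M[K]_m, forall j, g j \in unitmx /\
    forall z : 'cV[K]_m, c *m tens2 z (bvec j) = tens2 (bvec j) (g j *m z).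

Definition flipmx : 'M[K]_#|{: Pair}| :=
  mxOf (fun (b a : Pair) => ((b.1 == a.2) && (b.2 == a.1))%:R).

(* Id^{(x) i} (x) A (x) Id^{(x) n-i-2} on V^{(x) n}, A acting on tensor positions
   i, i+1 (0-indexed; i.e. the paper's position i+1).  Out-of-range i gives 1. *)
Definition locmx (n : nat) (A : 'M[K]_#|{: Pair}|) (i : nat) : 'M[K]_#|{: Word n}| :=
  match (insub i : option 'I_n), (insub i.+1 : option 'I_n) with
  | Some p, Some q =>
      mxOf (fun w' w : Word n =>
        if [forall k : 'I_n, ((k != p) && (k != q)) ==> (w' k == w k)]
        then coef A (w' p, w' q) (w p, w q) else 0)
  | _, _ => 1%:M
  end.

Definition braided (c : 'M[K]_#|{: Pair}|) : Prop :=
  c \in unitmx /\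
  locmx 3 c 0 *m locmx 3 c 1 *m locmx 3 c 0 = locmx 3 c 1 *m locmx 3 c 0 *m locmx 3 c 1.

(* Relations common to LB_n and OLB_n, for images sg i, s i (generators indexed
   0 <= i < n-1, i.e. the paper's sigma_{i+1}, s_{i+1}); plus invertibility. *)
Definition far (i j : nat) := (i.+1 < j)%N || (j.+1 < i)%N.
Definition common_rels (n : nat) (sg s : nat -> 'M[K]_#|{: Word n}|) : Prop :=
  (forall i, (i.+1 < n)%N -> sg i \in unitmx /\ s i \in unitmx) /\
      (forall i, (i.+2 < n)%N -> sg i *m sg i.+1 *m sg i = sg i.+1 *m sg i *m sg i.+1) /\
      (forall i j, (i.+1 < n)%N -> (j.+1 < n)%N -> far i j -> sg i *m sg j = sg j *m sg i) /\
      (forall i, (i.+2 < n)%N -> s i *m s i.+1 *m s i = s i.+1 *m s i *m s i.+1) /\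
      (forall i j, (i.+1 < n)%N -> (j.+1 < n)%N -> far i j -> s i *m s j = s j *m s i) /\
      (forall i, (i.+1 < n)%N -> s i *m s i = 1%:M) /\
      (forall i j, (i.+1 < n)%N -> (j.+1 < n)%N -> far i j -> sg i *m s j = s j *m sg i) /\
      (* (L1) *)
      (forall i, (i.+2 < n)%N -> s i *m s i.+1 *m sg i = sg i.+1 *m s i *m s i.+1).

Definition LB_rep (n : nat) (sg s : nat -> 'M[K]_#|{: Word n}|) : Prop :=
  common_rels sg s /\
  (* (L2) *)
  (forall i, (i.+2 < n)%N -> sg i *m sg i.+1 *m s i = s i.+1 *m sg i *m sg i.+1).

Definition OLB_rep (n : nat) (sg s : nat -> 'M[K]_#|{: Word n}|) : Prop :=
  common_rels sg s /\
  (* (L3) *)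
  (forall i, (i.+2 < n)%N -> s i *m sg i.+1 *m sg i = sg i.+1 *m sg i *m s i.+1).

End LoopBraided.

From HB Require Import structures.
From mathcomp Require Import all_boot all_order all_algebra.
From mathcomp Require Import ring zify.
Set Implicit Arguments. Unset Strict Implicit. Unset Printing Implicit Defensive.
Import GRing.Theory.
Local Open Scope ring_scope.

(* Embedding an operator on k+1 consecutive tensor factors into V^{(x) n+1},
   acting as the identity on the other factors, is multiplicative and sends
   the local operators on V^{(x) k+1} to local operators on V^{(x) n+1}.  Hence
   each relation between adjacent generators reduces to V^{(x) 3}, while
   invertibility and s_i^2 = 1 reduce to V^{(x) 2}; far-apart generators act on
   disjoint factors and commute.  On V^{(x) 3}, S_1 S_2 conjugates c_1 into c_2,
   which is (L1) for every c.  If c(x_a (x) z) = g_a z (x) x_a, then c_2 c_1 maps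
   x_a (x) y (x) z to g_a y (x) g_a z (x) x_a, so it intertwines the flip of
   the last two factors with that of the first two: this is (L3).  The right
   group-type case (L2) is the mirror image. *)

Section Kernels.
Variable K : fieldType.

Definition kmul (W : finType) (f g : W -> W -> K) (a b : W) : K :=
  \sum_u f a u * g u b.

Lemma coef_mxOf (W : finType) (f : W -> W -> K) a b : coef (mxOf f) a b = f a b.
Proof. by rewrite /coef /mxOf mxE !enum_rankK. Qed.

Lemma mxOf_coef (W : finType) (M : 'M[K]_#|W|) : mxOf (coef M) = M.
Proof. by apply/matrixP => i j; rewrite /mxOf /coef mxE !enum_valK. Qed.

Lemma eq_mxOf (W : finType) (f g : W -> W -> K) : f =2 g -> mxOf f = mxOf g.
Proof. by move=> efg; apply/matrixP => i j; rewrite !mxE efg. Qed.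

Lemma mulmx_mxOf (W : finType) (f g : W -> W -> K) :
  mxOf f *m mxOf g = mxOf (kmul f g).
Proof.
apply/matrixP => i j; rewrite !mxE /kmul [RHS]big_enum_val /=.
by apply: eq_bigr => k _; rewrite !mxE.
Qed.

Lemma coef_mulmx (W : finType) (M N : 'M[K]_#|W|) a b :
  coef (M *m N) a b = kmul (coef M) (coef N) a b.
Proof. by rewrite -{1}(mxOf_coef M) -{1}(mxOf_coef N) mulmx_mxOf coef_mxOf. Qed.

Lemma coef1mx (W : finType) (a b : W) :
  coef (1%:M : 'M[K]_#|W|) a b = (a == b)%:R.
Proof. by rewrite /coef mxE (inj_eq enum_rank_inj). Qed.

Lemma mxOf_eq1 (W : finType) :
  mxOf (fun a b : W => (a == b)%:R) = 1%:M :> 'M[K]_#|W|.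
Proof. by rewrite -(mxOf_coef 1%:M); apply: eq_mxOf => a b; rewrite coef1mx. Qed.

Lemma kmul_permL (W : finType) (s : W -> W) : involutive s ->
  forall (X : W -> W -> K) a b, kmul (fun a b => (a == s b)%:R) X a b = X (s a) b.
Proof.
move=> sK X a b; rewrite /kmul (big_only1 (s a)) //= ?sK ?eqxx ?mul1r //.
by move=> u nu _; case: eqP => [e|]; [rewrite e sK eqxx in nu | rewrite mul0r].
Qed.

Lemma kmul_permR (W : finType) (s : W -> W) (X : W -> W -> K) a b :
  kmul X (fun a b => (a == s b)%:R) a b = X a (s b).
Proof.
rewrite /kmul (big_only1 (s b)) //= ?eqxx ?mulr1 //.
by move=> u /negbTE -> _; rewrite mulr0.
Qed.

End Kernels.

Lemma eq_inord N (x : 'I_N.+1) j : (j < N.+1)%N -> (x == inord j) = (x == j :> nat).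
Proof. by move=> ltjN; rewrite -val_eqE /= inordK. Qed.

Lemma insub_inord N j : (j < N.+1)%N -> (insub j : option 'I_N.+1) = Some (inord j).
Proof.
move=> ltjN; case: insubP => [u _ eu|]; last by rewrite ltjN.
by congr Some; apply: val_inj; rewrite /= inordK // -eu.
Qed.

Section Window.
Variables (K : fieldType) (m n k i : nat).
Hypothesis window_le : (i + k <= n)%N.
Local Notation Wn := (Word m n.+1).
Local Notation Wk := (Word m k.+1).

Definition in_window (x : 'I_n.+1) := (i <= x <= i + k)%N.
Definition restr (w : Wn) : Wk := [ffun t : 'I_k.+1 => w (inord (i + t))].
Definition splice (w : Wn) (t : Wk) : Wn :=
  [ffun x => if in_window x then t (inord (x - i)) else w x].
Definition agree_off (w' w : Wn) := [forall x, ~~ in_window x ==> (w' x == w x)].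
Definition lift_ker (F : Wk -> Wk -> K) (w' w : Wn) : K :=
  if agree_off w' w then F (restr w') (restr w) else 0.
Definition embedmx (M : 'M[K]_#|{: Wk}|) : 'M[K]_#|{: Wn}| :=
  mxOf (lift_ker (coef M)).

Lemma val_inord_window (t : 'I_k.+1) : (inord (i + t) : 'I_n.+1) = i + t :> nat.
Proof. by rewrite inordK //; have := ltn_ord t; lia. Qed.

Lemma inord_window (x : 'I_n.+1) :
  in_window x -> (inord (i + (inord (x - i) : 'I_k.+1)) : 'I_n.+1) = x.
Proof. by rewrite /in_window => xin; apply: val_inj; rewrite /= !inordK; lia. Qed.

Lemma restr_splice w t : restr (splice w t) = t.
Proof.
apply/ffunP => y; rewrite !ffunE /in_window val_inord_window.
by case: ifP => [_|]; [rewrite addKn inord_val | have := ltn_ord y; lia].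
Qed.

Lemma agree_off_splice w t : agree_off (splice w t) w.
Proof. by apply/forallP => x; apply/implyP => xout; rewrite ffunE (negbTE xout). Qed.

Lemma agree_off_refl w : agree_off w w.
Proof. by apply/forallP => x; apply/implyP. Qed.

Lemma agree_off_sym w1 w2 : agree_off w1 w2 -> agree_off w2 w1.
Proof. by move/forallP => h; apply/forallP => x; rewrite eq_sym; exact: h. Qed.

Lemma agree_off_trans w1 w2 w3 :
  agree_off w1 w2 -> agree_off w2 w3 -> agree_off w1 w3.
Proof.
move=> /forallP h12 /forallP h23; apply/forallP => x; apply/implyP => xout.
by rewrite (eqP (implyP (h12 x) xout)) (implyP (h23 x) xout).
Qed.

Lemma splice_restr u w : agree_off u w -> splice w (restr u) = u.
Proof.
move/forallP => h; apply/ffunP => x; rewrite !ffunE.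
case: ifP => [/inord_window -> //|xout].
by rewrite (eqP (implyP (h x) (negbT xout))).
Qed.

Lemma kmul_lift_ker (F G : Wk -> Wk -> K) w' w :
  kmul (lift_ker F) (lift_ker G) w' w = lift_ker (kmul F G) w' w.
Proof.
rewrite /kmul /lift_ker; case: (boolP (agree_off w' w)) => hw; last first.
  apply: big1 => u _; case: ifP => h1; case: ifP => h2; rewrite ?mul0r ?mulr0 //.
  by rewrite (agree_off_trans h1 h2) in hw.
rewrite (bigID (agree_off^~ w)) /= [X in _ + X]big1 ?addr0; last first.
  by move=> u /negbTE ->; rewrite mulr0.
rewrite (reindex_onto (splice w) restr); last by move=> u; exact: splice_restr.
apply: eq_big => t; first by rewrite agree_off_splice restr_splice eqxx.
move=> _; rewrite agree_off_splice restr_splice.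
by rewrite (agree_off_trans hw (agree_off_sym (agree_off_splice w t))).
Qed.

Lemma lift_ker_delta w' w : lift_ker (fun a b => (a == b)%:R) w' w = (w' == w)%:R.
Proof.
rewrite /lift_ker; case: ifP => hw; last by case: eqP => // e; rewrite e agree_off_refl in hw.
have -> // : (restr w' == restr w) = (w' == w).
apply/idP/idP => [/eqP e|/eqP -> //]; apply/eqP.
by rewrite -(splice_restr hw) e splice_restr // agree_off_refl.
Qed.

Lemma embedmxM M N : embedmx (M *m N) = embedmx M *m embedmx N.
Proof.
rewrite /embedmx mulmx_mxOf; apply: eq_mxOf => a b.
by rewrite kmul_lift_ker /lift_ker; case: ifP => // _; exact: coef_mulmx.
Qed.

Lemma embedmx1 : embedmx 1%:M = 1%:M.
Proof.
rewrite /embedmx -(mxOf_eq1 K Wn); apply: eq_mxOf => a b.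
by rewrite -lift_ker_delta /lift_ker; case: ifP => //; rewrite coef1mx.
Qed.

End Window.

Section Local.
Variables (K : fieldType) (m : nat).
Implicit Types A B : 'M[K]_#|{: Pair m}|.

Definition loc_ker A N (p q : 'I_N) (w' w : Word m N) : K :=
  if [forall x, ((x != p) && (x != q)) ==> (w' x == w x)]
  then coef A (w' p, w' q) (w p, w q) else 0.

Lemma locmxE n A i : (i.+1 < n.+1)%N ->
  locmx n.+1 A i = mxOf (loc_ker A (inord i) (inord i.+1)).
Proof. by move=> lt_in; rewrite /locmx !insub_inord //; lia. Qed.

Lemma agree_off_loc n k i t (w' w : Word m n.+1) :
  (i + k <= n)%N -> (t.+1 <= k)%N ->
  agree_off k i w' w &&
    [forall y : 'I_k.+1, (y != inord t) && (y != inord t.+1) ==>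
                         (restr k i w' y == restr k i w y)]
  = [forall x : 'I_n.+1, (x != inord (i + t)) && (x != inord (i + t).+1) ==>
                         (w' x == w x)].
Proof.
move=> le_ikn le_tk; apply/idP/idP.
- case/andP => /forallP hout /forallP hin; apply/forallP => x; apply/implyP.
  rewrite !eq_inord; try lia.
  move=> xt; case: (boolP (in_window k i x)) => xin; last exact: (implyP (hout x) xin).
  have := implyP (hin (inord (x - i))); rewrite !eq_inord; try lia.
  rewrite !ffunE inord_window //; apply.
  by move: xin; rewrite /in_window => xin; rewrite /= !inordK; lia.
- move/forallP => h; apply/andP; split; apply/forallP.
  + move=> x; apply/implyP => xout; apply: (implyP (h x)).
    by move: xout; rewrite /in_window !eq_inord; lia.
  + move=> y; apply/implyP; rewrite !eq_inord; try lia.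
    move=> yt; rewrite !ffunE; apply: (implyP (h _)).
    by rewrite !eq_inord ?val_inord_window //; have := ltn_ord y; lia.
Qed.

Lemma embedmx_locmx n k i A t : (i + k <= n)%N -> (t.+1 <= k)%N ->
  embedmx n i (locmx k.+1 A t) = locmx n.+1 A (i + t).
Proof.
move=> le_ikn le_tk; rewrite !locmxE; try lia.
rewrite /embedmx; apply: eq_mxOf => w' w; rewrite /lift_ker coef_mxOf /loc_ker.
rewrite !ffunE !inordK ?addnS; try lia.
rewrite -(agree_off_loc w' w le_ikn le_tk).
by case: (agree_off _ _ _ _); case: [forall y, _].
Qed.

Lemma kmul_loc_ker_disjoint N A B (p q p' q' : 'I_N) :
  p != p' -> p != q' -> q != p' -> q != q' -> forall w' w,
  kmul (loc_ker A p q) (loc_ker B p' q') w' w =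
  if [forall x, [&& x != p, x != q, x != p' & x != q'] ==> (w' x == w x)]
  then coef A (w' p, w' q) (w p, w q) * coef B (w' p', w' q') (w p', w q') else 0.
Proof.
move=> pp' pq' qp' qq' w' w.
(* the only intermediate word contributing to the sum *)
pose u0 : Word m N := [ffun x => if (x == p) || (x == q) then w x else w' x].
rewrite /kmul (big_only1 u0) //; last first.
  move=> u /negP nu _; rewrite /loc_ker.
  case: ifP => /forallP e1; last by rewrite mul0r.
  case: ifP => /forallP e2; last by rewrite mulr0.
  exfalso; apply: nu; apply/eqP/ffunP => x; rewrite ffunE.
  case: (boolP ((x == p) || (x == q))) => hx.
    apply/eqP; apply: (implyP (e2 x)).
    by case/orP: hx => /eqP ->; apply/andP; split; rewrite // eq_sym.
  by rewrite negb_or in hx; rewrite (eqP (implyP (e1 x) hx)).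
have up : u0 p = w p by rewrite ffunE eqxx.
have uq : u0 q = w q by rewrite ffunE eqxx orbT.
have up' : u0 p' = w' p' by rewrite ffunE eq_sym (negbTE pp') eq_sym (negbTE qp').
have uq' : u0 q' = w' q' by rewrite ffunE eq_sym (negbTE pq') eq_sym (negbTE qq').
rewrite /loc_ker up uq up' uq'.
have -> : [forall x, (x != p) && (x != q) ==> (w' x == u0 x)].
  apply/forallP => x; apply/implyP => /andP[xp xq].
  by rewrite ffunE (negbTE xp) (negbTE xq).
set C1 := [forall x, _ ==> (u0 x == w x)]; set C2 := [forall x, _].
suff -> : C1 = C2 by case: C2; rewrite ?mulr0.
apply: eq_forallb => x; rewrite ffunE.
case: (boolP ((x == p) || (x == q))) => hx /=.
  by rewrite eqxx implybT; case/orP: hx => /eqP ->; rewrite eqxx ?andbF.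
by rewrite negb_or in hx; case/andP: hx => -> ->.
Qed.

Lemma loc_ker_comm N A B (p q p' q' : 'I_N) :
  p != p' -> p != q' -> q != p' -> q != q' ->
  mxOf (loc_ker A p q) *m mxOf (loc_ker B p' q') =
  mxOf (loc_ker B p' q') *m mxOf (loc_ker A p q).
Proof.
move=> pp' pq' qp' qq'; rewrite !mulmx_mxOf; apply: eq_mxOf => w' w.
rewrite !kmul_loc_ker_disjoint // 1?eq_sym //; try by rewrite eq_sym.
set C1 := [forall x, _]; set C2 := [forall x, _].
suff -> : C1 = C2 by case: C2; rewrite // mulrC.
apply: eq_forallb => x.
by case: (x != p); case: (x != q); case: (x != p'); case: (x != q').
Qed.

Lemma locmx_far_comm n A B i j :
  (i.+1 < n.+1)%N -> (j.+1 < n.+1)%N -> far i j ->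
  locmx n.+1 A i *m locmx n.+1 B j = locmx n.+1 B j *m locmx n.+1 A i.
Proof.
move=> lt_in lt_jn fij; rewrite !locmxE //; apply: loc_ker_comm;
  rewrite eq_inord ?inordK //; move: fij; rewrite /far; lia.
Qed.

End Local.

Section TwoFactors.
Variables (K : fieldType) (m : nat).
Implicit Types A B : 'M[K]_#|{: Pair m}|.

Lemma forall_off01 (P : 'I_2 -> bool) :
  [forall x : 'I_2, (x != inord 0) && (x != inord 1) ==> P x].
Proof. by apply/forallP => x; apply/implyP; rewrite !eq_inord //; have := ltn_ord x; lia. Qed.

Definition word2 (p : Pair m) : Word m 2 :=
  [ffun x => if x == inord 0 then p.1 else p.2].

Lemma word2K (u : Word m 2) : word2 (u (inord 0), u (inord 1)) = u.
Proof.
apply/ffunP => x; rewrite ffunE /=; case: ifP => [/eqP -> //|].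
rewrite eq_inord // => x0; congr (u _); apply: val_inj; rewrite /= inordK //.
by have := ltn_ord x; move: x0; lia.
Qed.

Lemma word2E (p : Pair m) : (word2 p (inord 0), word2 p (inord 1)) = p.
Proof. by rewrite !ffunE eqxx eq_inord // inordK //; case: p. Qed.

Lemma sum_word2 (G : Pair m -> K) :
  \sum_(u : Word m 2) G (u (inord 0), u (inord 1)) = \sum_p G p.
Proof.
rewrite (reindex word2) /=; first by apply: eq_bigr => p _; rewrite word2E.
by exists (fun u => (u (inord 0), u (inord 1))) => x _; [exact: word2E | exact: word2K].
Qed.

Lemma locmx2M A B : locmx 2 A 0 *m locmx 2 B 0 = locmx 2 (A *m B) 0.
Proof.
rewrite !locmxE // mulmx_mxOf; apply: eq_mxOf => a b.
rewrite /kmul /loc_ker !forall_off01 coef_mulmx /kmul -sum_word2.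
by apply: eq_bigr => u _; rewrite !forall_off01.
Qed.

Lemma locmx2_1 : locmx 2 (1%:M : 'M[K]_#|{: Pair m}|) 0 = 1%:M.
Proof.
rewrite locmxE // -(mxOf_eq1 K (Word m 2)); apply: eq_mxOf => a b.
rewrite /loc_ker forall_off01 coef1mx.
have -> // : ((a (inord 0), a (inord 1)) == (b (inord 0), b (inord 1))) = (a == b).
by apply/eqP/eqP => [e|-> //]; rewrite -(word2K a) -(word2K b) e.
Qed.

Lemma flipmxE : flipmx K m = mxOf (fun b a : Pair m => (b == (a.2, a.1))%:R).
Proof. by apply: eq_mxOf => -[b1 b2] a; rewrite xpair_eqE. Qed.

Lemma flipmxK : flipmx K m *m flipmx K m = 1%:M.
Proof.
rewrite flipmxE mulmx_mxOf -(mxOf_eq1 K (Pair m)); apply: eq_mxOf => b a.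
by rewrite (kmul_permR (fun a : Pair m => (a.2, a.1))); case: a.
Qed.

End TwoFactors.

Section ThreeFactors.
Variables (K : fieldType) (m : nat).
Local Notation W3 := (Word m 3).
Implicit Types A : 'M[K]_#|{: Pair m}|.

Definition o0 : 'I_3 := @Ordinal 3 0 isT.
Definition o1 : 'I_3 := @Ordinal 3 1 isT.
Definition o2 : 'I_3 := @Ordinal 3 2 isT.

Lemma ord3P (x : 'I_3) : [\/ x = o0, x = o1 | x = o2].
Proof.
case: x => [[|[|[|k]]] lt_x3]; [apply: Or31 | apply: Or32 | apply: Or33 | by []];
  exact: val_inj.
Qed.

Definition word3 (p q r : 'I_m) : W3 :=
  [ffun x => if x == o0 then p else if x == o1 then q else r].

Lemma word3_eqE (a b : W3) :
  (a == b) = [&& a o0 == b o0, a o1 == b o1 & a o2 == b o2].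
Proof.
apply/eqP/and3P => [-> //|[/eqP e0 /eqP e1 /eqP e2]].
by apply/ffunP => x; case: (ord3P x) => ->.
Qed.

Lemma forall3_off01 (P : 'I_3 -> bool) :
  [forall x, (x != o0) && (x != o1) ==> P x] = P o2.
Proof.
apply/forallP/idP => [h|h x]; first exact: (implyP (h o2)).
by apply/implyP; case: (ord3P x) => ->.
Qed.

Lemma forall3_off12 (P : 'I_3 -> bool) :
  [forall x, (x != o1) && (x != o2) ==> P x] = P o0.
Proof.
apply/forallP/idP => [h|h x]; first exact: (implyP (h o0)).
by apply/implyP; case: (ord3P x) => ->.
Qed.

Definition ker01 A (a b : W3) := (a o2 == b o2)%:R * coef A (a o0, a o1) (b o0, b o1).
Definition ker12 A (a b : W3) := (a o0 == b o0)%:R * coef A (a o1, a o2) (b o1, b o2).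

Lemma locmx3_0 A : locmx 3 A 0 = mxOf (ker01 A).
Proof.
have [e0 e1] : (inord 0 : 'I_3) = o0 /\ (inord 1 : 'I_3) = o1.
  by split; apply: val_inj; rewrite /= inordK.
rewrite locmxE // e0 e1; apply: eq_mxOf => a b; rewrite /loc_ker forall3_off01 /ker01.
by case: (a o2 == b o2); rewrite ?mul1r ?mul0r.
Qed.

Lemma locmx3_1 A : locmx 3 A 1 = mxOf (ker12 A).
Proof.
have [e1 e2] : (inord 1 : 'I_3) = o1 /\ (inord 2 : 'I_3) = o2.
  by split; apply: val_inj; rewrite /= inordK.
rewrite locmxE // e1 e2; apply: eq_mxOf => a b; rewrite /loc_ker forall3_off12 /ker12.
by case: (a o0 == b o0); rewrite ?mul1r ?mul0r.
Qed.

Definition swap01 (a : W3) := word3 (a o1) (a o0) (a o2).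
Definition swap12 (a : W3) := word3 (a o0) (a o2) (a o1).

Lemma swap01K : involutive swap01.
Proof. by move=> a; apply/eqP; rewrite word3_eqE /swap01 !ffunE !eqxx. Qed.

Lemma swap12K : involutive swap12.
Proof. by move=> a; apply/eqP; rewrite word3_eqE /swap12 !ffunE !eqxx. Qed.

Lemma flip3_0 : locmx 3 (flipmx K m) 0 = mxOf (fun a b => (a == swap01 b)%:R).
Proof.
rewrite locmx3_0; apply: eq_mxOf => a b.
rewrite /ker01 /flipmx coef_mxOf word3_eqE /swap01 !ffunE /=.
by case: (a o2 == b o2); case: (a o0 == b o1); case: (a o1 == b o0); rewrite ?mulr1 ?mulr0.
Qed.

Lemma flip3_1 : locmx 3 (flipmx K m) 1 = mxOf (fun a b => (a == swap12 b)%:R).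
Proof.
rewrite locmx3_1; apply: eq_mxOf => a b.
rewrite /ker12 /flipmx coef_mxOf word3_eqE /swap12 !ffunE /=.
by case: (a o0 == b o0); case: (a o1 == b o2); case: (a o2 == b o1); rewrite ?mulr1 ?mulr0.
Qed.

Lemma flip3_braid :
  locmx 3 (flipmx K m) 0 *m locmx 3 (flipmx K m) 1 *m locmx 3 (flipmx K m) 0 =
  locmx 3 (flipmx K m) 1 *m locmx 3 (flipmx K m) 0 *m locmx 3 (flipmx K m) 1.
Proof.
rewrite -!mulmxA flip3_0 flip3_1 !mulmx_mxOf; apply: eq_mxOf => a b.
rewrite !(kmul_permL swap01K, kmul_permL swap12K) !word3_eqE /swap01 /swap12 !ffunE /=.
by case: (a o0 == b o2); case: (a o1 == b o1); case: (a o2 == b o0).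
Qed.

Lemma locmx3_L1 A :
  locmx 3 (flipmx K m) 0 *m locmx 3 (flipmx K m) 1 *m locmx 3 A 0 =
  locmx 3 A 1 *m locmx 3 (flipmx K m) 0 *m locmx 3 (flipmx K m) 1.
Proof.
rewrite -[LHS]mulmxA flip3_0 flip3_1 locmx3_0 locmx3_1 !mulmx_mxOf.
apply: eq_mxOf => a b; rewrite !(kmul_permL swap01K, kmul_permL swap12K) !kmul_permR.
by rewrite /ker01 /ker12 /swap01 /swap12 !ffunE.
Qed.

End ThreeFactors.

Section GroupType.
Variables (K : fieldType) (m : nat).
Local Notation W3 := (Word m 3).
Implicit Types A : 'M[K]_#|{: Pair m}|.

Lemma mulmx_bvec (M : 'M[K]_m) j x : (M *m bvec K j) x 0 = M x j.
Proof.
rewrite mxE (bigD1 j) //= big1 ?addr0; first by rewrite mxE eqxx mulr1.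
by move=> k /negbTE nkj; rewrite mxE nkj mulr0.
Qed.

Lemma tens2_enum_rank (u v : 'cV[K]_m) P :
  tens2 u v (enum_rank P) 0 = u P.1 0 * v P.2 0.
Proof. by rewrite mxE enum_rankK. Qed.

Lemma coef_tens2 A (i j : 'I_m) P :
  coef A P (i, j) = (A *m tens2 (bvec K i) (bvec K j)) (enum_rank P) 0.
Proof.
rewrite /coef mxE (bigD1 (enum_rank (i, j))) //= big1 ?addr0.
  by rewrite tens2_enum_rank !mxE /= !eqxx /= !mulr1.
move=> k nk; rewrite !mxE.
case: (boolP (((enum_val k).1 == i) && ((enum_val k).2 == j))) => [/andP[/eqP e1 /eqP e2]|].
  by rewrite -(enum_valK k) -e1 -e2 -surjective_pairing eqxx in nk.
by rewrite negb_and => /orP[] /negbTE ->; rewrite ?mul0r ?mulr0.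
Qed.

Lemma coef_left_group_type A (g : 'I_m -> 'M[K]_m) :
  (forall i (z : 'cV[K]_m), A *m tens2 (bvec K i) z = tens2 (g i *m z) (bvec K i)) ->
  forall p1 p2 i j, coef A (p1, p2) (i, j) = g i p1 j * (p2 == i)%:R.
Proof. by move=> gA p1 p2 i j; rewrite coef_tens2 gA tens2_enum_rank mulmx_bvec mxE. Qed.

Lemma coef_right_group_type A (g : 'I_m -> 'M[K]_m) :
  (forall j (z : 'cV[K]_m), A *m tens2 z (bvec K j) = tens2 (bvec K j) (g j *m z)) ->
  forall p1 p2 i j, coef A (p1, p2) (i, j) = (p1 == j)%:R * g j p2 i.
Proof. by move=> gA p1 p2 i j; rewrite coef_tens2 gA tens2_enum_rank mulmx_bvec mxE. Qed.

Lemma kmul_ker12_ker01_left A (g : 'I_m -> 'M[K]_m) :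
  (forall p1 p2 i j, coef A (p1, p2) (i, j) = g i p1 j * (p2 == i)%:R) ->
  forall a b : W3, kmul (ker12 A) (ker01 A) a b =
    (a o2 == b o0)%:R * g (b o0) (a o1) (b o2) * g (b o0) (a o0) (b o1).
Proof.
move=> coefA a b.
rewrite /kmul (big_only1 (word3 (a o0) (b o0) (b o2))) //.
  by rewrite /ker01 /ker12 !coefA !ffunE /= !eqxx /=; ring.
move=> u; rewrite word3_eqE !ffunE /= !negb_and /ker01 /ker12 !coefA => u_ne _.
case/orP: u_ne => [ne0|/orP[ne1|ne2]].
- by rewrite eq_sym (negbTE ne0) /=; ring.
- by rewrite (negbTE ne1) /=; ring.
- by rewrite (negbTE ne2) /=; ring.
Qed.

Lemma kmul_ker01_ker12_right A (g : 'I_m -> 'M[K]_m) :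
  (forall p1 p2 i j, coef A (p1, p2) (i, j) = (p1 == j)%:R * g j p2 i) ->
  forall a b : W3, kmul (ker01 A) (ker12 A) a b =
    (a o0 == b o2)%:R * g (a o0) (a o1) (b o0) * g (b o2) (a o2) (b o1).
Proof.
move=> coefA a b.
rewrite /kmul (big_only1 (word3 (b o0) (a o0) (a o2))) //.
  by rewrite /ker01 /ker12 !coefA !ffunE /= !eqxx /=; ring.
move=> u; rewrite word3_eqE !ffunE /= !negb_and /ker01 /ker12 !coefA => u_ne _.
case/orP: u_ne => [ne0|/orP[ne1|ne2]].
- by rewrite (negbTE ne0) /=; ring.
- by rewrite [a o0 == _]eq_sym (negbTE ne1) /=; ring.
- by rewrite [a o2 == _]eq_sym (negbTE ne2) /=; ring.
Qed.

Lemma locmx3_L3 A : left_group_type A ->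
  locmx 3 (flipmx K m) 0 *m locmx 3 A 1 *m locmx 3 A 0 =
  locmx 3 A 1 *m locmx 3 A 0 *m locmx 3 (flipmx K m) 1.
Proof.
case=> g gA; have kA := kmul_ker12_ker01_left (coef_left_group_type (fun i => (gA i).2)).
rewrite -[LHS]mulmxA flip3_0 flip3_1 locmx3_0 locmx3_1 !mulmx_mxOf.
apply: eq_mxOf => a b; rewrite (kmul_permL (@swap01K m)) kmul_permR !kA.
by rewrite /swap01 /swap12 !ffunE /=; ring.
Qed.

Lemma locmx3_L2 A : right_group_type A ->
  locmx 3 A 0 *m locmx 3 A 1 *m locmx 3 (flipmx K m) 0 =
  locmx 3 (flipmx K m) 1 *m locmx 3 A 0 *m locmx 3 A 1.
Proof.
case=> g gA; have kA := kmul_ker01_ker12_right (coef_right_group_type (fun j => (gA j).2)).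
rewrite -[RHS]mulmxA flip3_0 flip3_1 locmx3_0 locmx3_1 !mulmx_mxOf.
apply: eq_mxOf => a b; rewrite kmul_permR (kmul_permL (@swap12K m)) !kA.
rewrite /swap01 /swap12 !ffunE /=.
by case: eqP => [->|]; [ring | rewrite !mul0r].
Qed.

End GroupType.

Section Transfer.
Variables (K : fieldType) (m n i : nat).
Implicit Types A B : 'M[K]_#|{: Pair m}|.

Section Adjacent.
Hypothesis lt_in : (i.+1 < n.+1)%N.

Lemma locmx_embed2 A : locmx n.+1 A i = embedmx n i (locmx 2 A 0).
Proof. by rewrite embedmx_locmx ?addn0 //; lia. Qed.

Lemma locmxM A B : locmx n.+1 A i *m locmx n.+1 B i = locmx n.+1 (A *m B) i.
Proof. by rewrite !locmx_embed2 -embedmxM ?locmx2M //; lia. Qed.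

Lemma locmx1 : locmx n.+1 (1%:M : 'M[K]_#|{: Pair m}|) i = 1%:M.
Proof. by rewrite locmx_embed2 locmx2_1 embedmx1 //; lia. Qed.

Lemma locmx_unitmx A : A \in unitmx -> locmx n.+1 A i \in unitmx.
Proof.
move=> Au; have := locmxM A (invmx A); rewrite mulmxV // locmx1.
by case/mulmx1_unit.
Qed.

End Adjacent.

Section Consecutive.
Hypothesis lt_i2n : (i.+2 < n.+1)%N.

Lemma locmx_embed3_0 A : locmx n.+1 A i = embedmx n i (locmx 3 A 0).
Proof. by rewrite embedmx_locmx ?addn0 //; lia. Qed.

Lemma locmx_embed3_1 A : locmx n.+1 A i.+1 = embedmx n i (locmx 3 A 1).
Proof. by rewrite embedmx_locmx ?addn1 //; lia. Qed.

Lemma embedmx3M (M N : 'M[K]_#|{: Word m 3}|) :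
  embedmx n i M *m embedmx n i N = embedmx n i (M *m N).
Proof. by rewrite embedmxM //; lia. Qed.

End Consecutive.
End Transfer.

Lemma common_rels_locmx (K : fieldType) (m n : nat) (c : 'M[K]_#|{: Pair m}|) :
  braided c -> common_rels (locmx n.+1 c) (locmx n.+1 (flipmx K m)).
Proof.
case=> cu cbraid; have [flipu _] := mulmx1_unit (flipmxK K m).
split; last split; last split; last split; last split; last split; last split.
- by move=> i lt_in; split; apply: locmx_unitmx.
- by move=> i lt; rewrite !(locmx_embed3_0 lt) !(locmx_embed3_1 lt) !embedmx3M // cbraid.
- by move=> i j lt_in lt_jn; apply: locmx_far_comm.
- by move=> i lt; rewrite !(locmx_embed3_0 lt) !(locmx_embed3_1 lt) !embedmx3M // flip3_braid.
- by move=> i j lt_in lt_jn; apply: locmx_far_comm.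
- by move=> i lt_in; rewrite locmxM // flipmxK locmx1.
- by move=> i j lt_in lt_jn; apply: locmx_far_comm.
- by move=> i lt; rewrite !(locmx_embed3_0 lt) !(locmx_embed3_1 lt) !embedmx3M // locmx3_L1.
Qed.

Theorem proposition3p3 (K : fieldType) (m : nat) (c : 'M[K]_#|{: Pair m}|) :
  braided c ->
  (left_group_type c ->
     forall n : nat, (2 <= n)%N ->
       OLB_rep (locmx n c) (locmx n (flipmx K m))) /\
  (right_group_type c ->
     forall n : nat, (2 <= n)%N ->
       LB_rep (locmx n c) (locmx n (flipmx K m))).
Proof.
move=> cbraid; split=> cgroup [|n] // _; split; try exact: common_rels_locmx;
  move=> i lt; rewrite !(locmx_embed3_0 lt) !(locmx_embed3_1 lt) !embedmx3M //.
- by rewrite locmx3_L3.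
- by rewrite locmx3_L2.
Qed.
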